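(* Let $n\ge 2$ be even and $k\ge 3$. Let $Q(n,k)$ be the configuration with exactly $2k-1$ levels in which: level $2k-1$ (top) consists of $\frac n2$ blocks in consecutive slots; level $2k-2$ is full ($n$ blocks); and each level $i$ with $1\le i\le 2k-3$ consists of $\frac n2$ blocks in pairwise non-adjacent slots. Then the genus of (the boundary surface of) $Q(n,k)$ is $$ g(n,k)=\frac{n(n-2)(k-2)}{2}. $$
   Context: Blocks are boxes of length $n$, width $1$, height $1$. Level $i$ occupies heights $[i-1,i]$ and has $n$ slots $j=1,\dots,n$; a block in slot $j$ of an odd level $i$ is $[0,n]\times[j-1,j]\times[i-1,i]$, and a block in slot $j$ of an even level $i$ is $[j-1,j]\times[0,n]\times[i-1,i]$. Slots $j,j'$ are adjacent if $|j-j'|=1$. The genus of a configuration is the genus of the boundary surface of the union of its blocks (a connected closed polyhedral surface). The configuration uses $nk$ blocks in total. *)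

From HB Require Import structures.
From mathcomp Require Import all_boot all_order all_algebra.
Set Implicit Arguments. Unset Strict Implicit. Unset Printing Implicit Defensive.
Import Order.TTheory GRing.Theory Num.Theory.

(* A configuration of blocks: [c i j] is true iff slot j of level i holds a
   block (levels and slots are 1-based).  A configuration is given together
   with n (block length / number of slots) and H (number of levels); only
   levels 1..H and slots 1..n are used.

   The union of blocks is decomposed into unit cubes [x,x+1]x[y,y+1]x[z,z+1]
   (x y z integers, the "lower corner" p=(x,y,z)).  Cube (x,y,z) belongs to a
   block of level i=z+1, slot j=y+1 if i is odd, slot j=x+1 if i is even. *)

Definition config := nat -> nat -> bool.
Definition pt := (int * int * int)%type.

Definition padd (p q : pt) : pt := (p.1.1 + q.1.1, p.1.2 + q.1.2, p.2 + q.2)%R.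
Definition psub (p q : pt) : pt := (p.1.1 - q.1.1, p.1.2 - q.1.2, p.2 - q.2)%R.
Definition pzero : pt := (0, 0, 0)%R.
Definition unitv (d : nat) : pt :=
  match d with 0 => (1, 0, 0)%R | 1 => (0, 1, 0)%R | _ => (0, 0, 1)%R end.
Definition bscale (b : bool) (p : pt) : pt := if b then p else pzero.

Definition cube_filled (n H : nat) (c : config) (p : pt) : bool :=
  let: (x, y, z) := p in
  [&& (0 <= x)%R, (x < (Posz n))%R, (0 <= y)%R, (y < (Posz n))%R, (0 <= z)%R,
      (z < (Posz H))%R &
      (if odd (absz z).+1 then c (absz z).+1 (absz y).+1
       else c (absz z).+1 (absz x).+1)].

(* The boundary surface of the union, as a subcomplex of the unit cubical
   lattice.  The lattice square (p,d) is the unit square with lower corner p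
   normal to direction d; it separates cube p from cube p - e_d and lies on the
   boundary iff exactly one of those two cubes is filled. *)
Definition bface n H c (p : pt) (d : nat) : bool :=
  cube_filled n H c p != cube_filled n H c (psub p (unitv d)).

Definition odir1 (d : nat) : nat := (d.+1 %% 3)%N.
Definition odir2 (d : nat) : nat := (d.+2 %% 3)%N.

(* Lattice edge (q,d') = segment from q to q + e_d'.  It is an edge of the
   lattice square (p,d) iff d <> d' and q = p or q = p + e_d'' (d'' the third
   direction, = 3 - d - d'). *)
Definition bedge n H c (q : pt) (d' : nat) : bool :=
  [exists d : 'I_3, (val d != d') &&
     (bface n H c q d || bface n H c (psub q (unitv (3 - d - d'))) d)].

(* Boundary vertex = corner of some boundary square. The corners of (p,d)
   are p + s e_{d1} + t e_{d2}, s,t in {0,1}. *)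
Definition bvert n H c (q : pt) : bool :=
  [exists d : 'I_3, [exists s : bool, [exists t : bool,
     bface n H c (psub (psub q (bscale s (unitv (odir1 d))))
                       (bscale t (unitv (odir2 d)))) d]]].

(* All boundary cells have lower corner in [0,n]x[0,n]x[0,H]. *)
Definition box (n H : nat) := ('I_n.+1 * 'I_n.+1 * 'I_H.+1)%type.
Definition ptOf n H (b : box n H) : pt :=
  ((Posz (nat_of_ord b.1.1)), (Posz (nat_of_ord b.1.2)), (Posz (nat_of_ord b.2))).

Definition nVerts n H c : nat := #|[set b : box n H | bvert n H c (ptOf b)]|.
Definition nEdges n H c : nat :=
  #|[set x : box n H * 'I_3 | bedge n H c (ptOf x.1) x.2]|.
Definition nFaces n H c : nat :=
  #|[set x : box n H * 'I_3 | bface n H c (ptOf x.1) x.2]|.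

Definition euler_char n H c : int :=
  ((Posz (nVerts n H c)) - (Posz (nEdges n H c)) + (Posz (nFaces n H c)))%R.

(* Genus of the (connected closed orientable) boundary surface: chi = 2 - 2g. *)
Definition genus n H c : int := ((2 - euler_char n H c) %/ 2)%Z.

(* Attach every boundary cell to its lower corner.  The Euler characteristic
   becomes a sum over lattice points of a local term that only depends on which
   of the eight cubes around the point are filled.  At height z these cubes
   come from the levels z and z + 1, and the local term is affine in each
   occupancy bit, so the sum over the horizontal slice at height z only depends
   on the number of blocks and of adjacent pairs of blocks in the two levels
   and on their end slots.  With n = 2m, the slices of Q(n, k) contribute m at
   the bottom, -2m(m-1) between two sparse levels, 1 - m, 0 and 1 at the top,
   so chi = 2 - 4(k-2)m(m-1). *)

From HB Require Import structures.
From mathcomp Require Import all_boot all_order all_algebra.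
From mathcomp Require Import zify ring.
Set Implicit Arguments. Unset Strict Implicit. Unset Printing Implicit Defensive.
Import Order.TTheory GRing.Theory Num.Theory.

Local Open Scope ring_scope.

Section Shape.
Variable g : pt -> bool.

Definition shape_face p d := g p != g (psub p (unitv d)).

Definition shape_edge q (d' : nat) :=
  [exists d : 'I_3, (val d != d') &&
     (shape_face q d || shape_face (psub q (unitv (3 - d - d'))) d)].

Definition shape_vertex q :=
  [exists d : 'I_3, [exists s : bool, [exists t : bool,
     shape_face (psub (psub q (bscale s (unitv (odir1 d))))
                      (bscale t (unitv (odir2 d)))) d]]].

Definition local_euler q : int :=
  Posz (shape_vertex q) - \sum_(d < 3) Posz (shape_edge q d)
  + \sum_(d < 3) Posz (shape_face q d).

End Shape.

Definition translate (g : pt -> bool) q p := g (padd p q).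

Lemma padd_psub p v q : padd (psub p v) q = psub (padd p q) v.
Proof.
case: p => [[a b] e]; case: v => [[a' b'] e']; case: q => [[a'' b''] e''].
by rewrite /padd /psub /=; congr (_, _, _); ring.
Qed.

Lemma padd0l q : padd pzero q = q.
Proof. by case: q => [[a b] e]; rewrite /padd /= !add0r. Qed.

Lemma shape_face_translate g q p d :
  shape_face (translate g q) p d = shape_face g (padd p q) d.
Proof. by rewrite /shape_face /translate padd_psub. Qed.

Lemma shape_edge_translate g q p d :
  shape_edge (translate g q) p d = shape_edge g (padd p q) d.
Proof. by apply: eq_existsb => e; rewrite !shape_face_translate padd_psub. Qed.

Lemma shape_vertex_translate g q p :
  shape_vertex (translate g q) p = shape_vertex g (padd p q).
Proof.
apply: eq_existsb => d; apply: eq_existsb => s; apply: eq_existsb => t.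
by rewrite shape_face_translate !padd_psub.
Qed.

Lemma local_euler_translate g q : local_euler g q = local_euler (translate g q) pzero.
Proof.
rewrite /local_euler shape_vertex_translate padd0l.
by congr (_ - _ + _); apply: eq_bigr => d _;
  rewrite ?shape_edge_translate ?shape_face_translate padd0l.
Qed.

Lemma exists_ord3 (P : 'I_3 -> bool) :
  [exists d, P d] = [|| P (@Ordinal 3 0 isT), P (@Ordinal 3 1 isT) | P (@Ordinal 3 2 isT)].
Proof.
apply/existsP/idP => [[[[|[|[|d]]] lt_d3]] Pd //|].
- by rewrite (bool_irrelevance lt_d3 isT) in Pd; rewrite Pd.
- by rewrite (bool_irrelevance lt_d3 isT) in Pd; rewrite Pd orbT.
- by rewrite (bool_irrelevance lt_d3 isT) in Pd; rewrite Pd !orbT.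
by case/or3P => Pd; eexists; exact: Pd.
Qed.

Lemma exists_bool (P : bool -> bool) : [exists s, P s] = P true || P false.
Proof. by apply/existsP/orP => [[[]] Ps|[] Ps]; [left|right|exists true|exists false]. Qed.

Lemma sum_ord3 (F : 'I_3 -> int) :
  \sum_(d < 3) F d = F (@Ordinal 3 0 isT) + F (@Ordinal 3 1 isT) + F (@Ordinal 3 2 isT).
Proof.
rewrite !big_ord_recr big_ord0 /= add0r.
by congr (_ + _ + _); congr F; exact: val_inj.
Qed.

(* [local_euler] with its bounded quantifiers and sums written out, so that it
   reduces by computation once [g] is a concrete function. *)
Definition local_euler_expanded g q : int :=
  let face s t d := shape_face g (psub (psub q (bscale s (unitv (odir1 d))))
                                       (bscale t (unitv (odir2 d)))) d in
  let vert d := [|| face true true d, face true false d, face false true d | face false false d] in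
  let edge_side d' d :=
    (d != d') && (shape_face g q d || shape_face g (psub q (unitv (3 - d - d'))) d) in
  let edge d' := [|| edge_side d' 0%N, edge_side d' 1%N | edge_side d' 2%N] in
  Posz [|| vert 0%N, vert 1%N | vert 2%N]
  - (Posz (edge 0%N) + Posz (edge 1%N) + Posz (edge 2%N))
  + (Posz (shape_face g q 0) + Posz (shape_face g q 1) + Posz (shape_face g q 2)).

Lemma local_euler_expand g q : local_euler g q = local_euler_expanded g q.
Proof.
rewrite /local_euler /local_euler_expanded !sum_ord3 /shape_vertex /shape_edge.
by rewrite !exists_ord3 !exists_bool !orbA.
Qed.

Definition octant_corner (s t u : bool) : pt :=
  ((if s then -1 else 0), (if t then -1 else 0), (if u then -1 else 0)).

(* [h s t u] is the occupancy of the unit cube with lower corner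
   [octant_corner s t u], one of the eight cubes incident to the origin. *)
Definition corner_euler (h : bool -> bool -> bool -> bool) : int :=
  local_euler_expanded (fun p => h (p.1.1 == -1) (p.1.2 == -1) (p.2 == -1)) pzero.

Lemma local_euler_origin g :
  local_euler g pzero = corner_euler (fun s t u => g (octant_corner s t u)).
Proof. by rewrite local_euler_expand. Qed.

Lemma eq_corner_euler h1 h2 :
  (forall s t u, h1 s t u = h2 s t u) -> corner_euler h1 = corner_euler h2.
Proof. by move=> eq_h; rewrite /corner_euler /local_euler_expanded /shape_face /= !eq_h. Qed.

(* Occupancy of the unit cube [X-1,X]x[Y-1,Y]x[Z-1,Z], indexed like slots and levels from 1. *)
Definition cell n H (c : config) X Y Z :=
  [&& 0 < X <= n, 0 < Y <= n, 0 < Z <= H & if odd Z then c Z Y else c Z X]%N.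

Lemma cube_filled_cell n H c X Y Z :
  cube_filled n H c (Posz X - 1, Posz Y - 1, Posz Z - 1) = cell n H c X Y Z.
Proof.
have succ_sub1 (i : nat) : Posz i.+1 - 1 = Posz i by rewrite -addn1 PoszD addrK.
rewrite /cube_filled /cell.
case: X => [|X]; first by [].
case: Y => [|Y]; first by rewrite /= ?andbF.
case: Z => [|Z]; first by rewrite /= ?andbF.
by rewrite !succ_sub1 /= !ltz_nat.
Qed.

Lemma local_euler_cube_filled n H c x y z :
  local_euler (cube_filled n H c) (Posz x, Posz y, Posz z) =
  corner_euler (fun s t u => cell n H c (x + ~~ s) (y + ~~ t) (z + ~~ u)).
Proof.
have corner_shift (s : bool) i : (if s then -1 else 0) + Posz i = Posz (i + ~~ s) - 1.
  by case: s; rewrite /= ?addn0 ?addn1; lia.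
rewrite local_euler_translate local_euler_origin; apply: eq_corner_euler => s t u.
by rewrite /translate /octant_corner /padd !corner_shift -cube_filled_cell.
Qed.

Lemma card_set_sum (T : finType) (P : pred T) : #|[set x | P x]| = (\sum_x P x)%N.
Proof. by rewrite -sum1_card big_mkcond /=; apply: eq_bigr => x _; rewrite inE; case: (P x). Qed.

Lemma Posz_sum (I : finType) (F : I -> nat) : Posz (\sum_i F i) = \sum_i Posz (F i).
Proof. exact: (big_morph Posz PoszD (erefl _)). Qed.

Definition slice_euler n H c (z : nat) : int :=
  \sum_(x < n.+1) \sum_(y < n.+1) local_euler (cube_filled n H c) (Posz x, Posz y, Posz z).

Lemma euler_char_slices n H c : euler_char n H c = \sum_(z < H.+1) slice_euler n H c z.
Proof.
have -> : \sum_(z < H.+1) slice_euler n H c z =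
          \sum_(b : box n H) local_euler (cube_filled n H c) (ptOf b).
  rewrite /slice_euler exchange_big /=.
  under eq_bigr do rewrite exchange_big.
  by rewrite pair_bigA pair_bigA.
rewrite /euler_char /nVerts /nEdges /nFaces !card_set_sum !Posz_sum.
rewrite -(pair_bigA _ (fun (b : box n H) (d : 'I_3) => Posz (bedge n H c (ptOf b) d))).
rewrite -(pair_bigA _ (fun (b : box n H) (d : 'I_3) => Posz (bface n H c (ptOf b) d))).
by rewrite /local_euler big_split /= sumrB.
Qed.

Definition nblocks n (P : nat -> bool) : int := \sum_(v < n) Posz (P v.+1).
Definition nadjacent n (P : nat -> bool) : int := \sum_(v < n.-1) Posz (P v.+1 && P v.+2).

(* Position v of a row of n slots sees the slots v and v + 1.  The inner
   positions are summed using that F is affine in each slot bit, so only the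
   number s of occupied slots and w of adjacent occupied pairs matter. *)
Definition row_sum (F : bool -> bool -> bool -> bool -> int) n (s w : int) (p1 pn : bool) :=
  F false true false p1 + F true false pn false + (Posz n - 1) * F true true false false
  + (s - Posz pn) * (F true true true false - F true true false false)
  + (s - Posz p1) * (F true true false true - F true true false false)
  + w * (F true true true true - F true true true false - F true true false true
         + F true true false false).

Lemma sum_row F n (P : nat -> bool) : (0 < n)%N -> P 0%N = false -> P n.+1 = false ->
  \sum_(v < n.+1) F (0 < v <= n)%N (v < n)%N (P v) (P v.+1) =
  row_sum F n (nblocks n P) (nadjacent n P) (P 1%N) (P n).
Proof.
case: n => [//|n] _ P0 Pn.
have affine a b : F true true a b = F true true false false
   + Posz a * (F true true true false - F true true false false)
   + Posz b * (F true true false true - F true true false false)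
   + Posz (a && b) * (F true true true true - F true true true false
                      - F true true false true + F true true false false).
  by case: a; case: b => /=; ring.
have shifted : \sum_(i < n) Posz (P i.+2) =
                \sum_(i < n) Posz (P i.+1) + Posz (P n.+1) - Posz (P 1%N).
  have two_ways : Posz (P 1%N) + \sum_(i < n) Posz (P i.+2) =
                  \sum_(i < n) Posz (P i.+1) + Posz (P n.+1).
    exact: etrans (esym (big_ord_recl _ (fun v : 'I_n.+1 => Posz (P v.+1))))
                  (big_ord_recr _ (fun v : 'I_n.+1 => Posz (P v.+1))).
  by rewrite -two_ways; ring.
rewrite big_ord_recl big_ord_recr /= P0 Pn ltnn.
rewrite (eq_bigr (fun i : 'I_n => F true true (P i.+1) (P i.+2))); last first.
  by move=> i _; rewrite /bump /= add1n !ltnS ltn_ord (ltnW (ltn_ord i)).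
under eq_bigr do rewrite affine.
rewrite !big_split /= sumr_const card_ord -!mulr_suml shifted.
rewrite /row_sum /nblocks /nadjacent /bump /=.
rewrite [in RHS]big_ord_recr /= add1n leqnn -mulr_natr natz.
have -> : Posz n.+1 = Posz n + 1 by rewrite -addn1 PoszD.
ring.
Qed.

Definition slice G n (sP wP : int) (p1 pn : bool) (sQ wQ : int) (q1 qn : bool) :=
  row_sum (fun a b c d => row_sum (G a b c d) n sQ wQ q1 qn) n sP wP p1 pn.

Lemma sum_slice G n (P Q : nat -> bool) : (0 < n)%N ->
  P 0%N = false -> P n.+1 = false -> Q 0%N = false -> Q n.+1 = false ->
  \sum_(x < n.+1) \sum_(y < n.+1)
     G (0 < x <= n)%N (x < n)%N (P x) (P x.+1) (0 < y <= n)%N (y < n)%N (Q y) (Q y.+1) =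
  slice G n (nblocks n P) (nadjacent n P) (P 1%N) (P n)
            (nblocks n Q) (nadjacent n Q) (Q 1%N) (Q n).
Proof.
move=> n_gt0 P0 Pn Q0 Qn.
under eq_bigr do rewrite (sum_row (G _ _ _ _) n_gt0 Q0 Qn).
exact: (sum_row (fun a b c d => row_sum (G a b c d) _ _ _ _ _) n_gt0 P0 Pn).
Qed.

(* [corner_euler] at a lattice point (x, y, z) between a level with slots
   along x and one with slots along y: [a0], [a1] tell whether the columns
   x and x + 1 (counted from 1) lie in [1, n], and [a2], [a3] are the slots
   x and x + 1 of the level with slots along x; [b0]..[b3] are the same in y.
   For odd z the upper level z + 1 is the one with slots along x. *)
Definition corner_odd (a0 a1 a2 a3 b0 b1 b2 b3 : bool) : int :=
  corner_euler (fun s t u => if u then (if s then a0 else a1) && (if t then b2 else b3)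
                             else (if t then b0 else b1) && (if s then a2 else a3)).
Definition corner_even (a0 a1 a2 a3 b0 b1 b2 b3 : bool) : int :=
  corner_euler (fun s t u => if u then (if t then b0 else b1) && (if s then a2 else a3)
                             else (if s then a0 else a1) && (if t then b2 else b3)).

Section Slices.
Variables (n H : nat) (c : config).
Hypothesis c_supp : forall i j, c i j -> (1 <= i <= H)%N /\ (1 <= j <= n)%N.

Lemma cellE X Y Z :
  cell n H c X Y Z = if odd Z then (0 < X <= n)%N && c Z Y else (0 < Y <= n)%N && c Z X.
Proof.
rewrite /cell; case: (odd Z).
- by case cZY: (c Z Y); rewrite ?andbF //; have [-> ->] := c_supp cZY; rewrite !andbT.
- by case cZX: (c Z X); rewrite ?andbF //; have [-> ->] := c_supp cZX; rewrite !andbT.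
Qed.

Lemma slice_euler_odd z : odd z ->
  slice_euler n H c z = \sum_(x < n.+1) \sum_(y < n.+1)
     corner_odd (0 < x <= n)%N (x < n)%N (c z.+1 x) (c z.+1 x.+1)
                (0 < y <= n)%N (y < n)%N (c z y) (c z y.+1).
Proof.
move=> z_odd; apply: eq_bigr => x _; apply: eq_bigr => y _.
rewrite local_euler_cube_filled; apply: eq_corner_euler => s t u.
rewrite cellE.
by case: s; case: t; case: u; rewrite /= ?addn0 ?addn1 /= ?z_odd //= ?ltnS.
Qed.

Lemma slice_euler_even z : ~~ odd z ->
  slice_euler n H c z = \sum_(x < n.+1) \sum_(y < n.+1)
     corner_even (0 < x <= n)%N (x < n)%N (c z x) (c z x.+1)
                 (0 < y <= n)%N (y < n)%N (c z.+1 y) (c z.+1 y.+1).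
Proof.
move=> z_even; apply: eq_bigr => x _; apply: eq_bigr => y _.
rewrite local_euler_cube_filled; apply: eq_corner_euler => s t u.
rewrite cellE.
by case: s; case: t; case: u; rewrite /= ?addn0 ?addn1 /= ?(negbTE z_even) //= ?ltnS.
Qed.

End Slices.

Ltac eval_corners := repeat match goal with
  | |- context [corner_odd ?a0 ?a1 ?a2 ?a3 ?b0 ?b1 ?b2 ?b3] =>
      let v := eval vm_compute in (corner_odd a0 a1 a2 a3 b0 b1 b2 b3) in
      change (corner_odd a0 a1 a2 a3 b0 b1 b2 b3) with v
  | |- context [corner_even ?a0 ?a1 ?a2 ?a3 ?b0 ?b1 ?b2 ?b3] =>
      let v := eval vm_compute in (corner_even a0 a1 a2 a3 b0 b1 b2 b3) in
      change (corner_even a0 a1 a2 a3 b0 b1 b2 b3) with v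
  end.

Ltac solve_slice := rewrite /slice /row_sum; eval_corners; rewrite /= ?PoszM; ring.

Lemma slice_sparse_odd m p1 pn q1 qn :
  slice corner_odd (2 * m) (Posz m) 0 p1 pn (Posz m) 0 q1 qn = - (2 * Posz m * (Posz m - 1)).
Proof. by case: p1 pn q1 qn => [] [] [] []; solve_slice. Qed.

Lemma slice_sparse_even m p1 pn q1 qn :
  slice corner_even (2 * m) (Posz m) 0 p1 pn (Posz m) 0 q1 qn = - (2 * Posz m * (Posz m - 1)).
Proof. by case: p1 pn q1 qn => [] [] [] []; solve_slice. Qed.

Lemma slice_empty_sparse m q1 qn :
  slice corner_even (2 * m) 0 0 false false (Posz m) 0 q1 qn = Posz m.
Proof. by case: q1 qn => [] []; solve_slice. Qed.

Lemma slice_sparse_full m q1 qn :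
  slice corner_odd (2 * m) (Posz (2 * m)) (Posz (2 * m) - 1) true true (Posz m) 0 q1 qn
  = - (Posz m - 1).
Proof. by case: q1 qn => [] []; solve_slice. Qed.

Lemma slice_full_interval m q1 qn :
  slice corner_even (2 * m) (Posz (2 * m)) (Posz (2 * m) - 1) true true
        (Posz m) (Posz m - 1) q1 qn = 0.
Proof. by case: q1 qn => [] []; solve_slice. Qed.

Lemma slice_interval_empty m q1 qn :
  slice corner_odd (2 * m) 0 0 false false (Posz m) (Posz m - 1) q1 qn = 1.
Proof. by case: q1 qn => [] []; solve_slice. Qed.

Lemma count_ord_interval N lo hi : (\sum_(v < N) (lo <= v < hi)%N = minn hi N - lo)%N.
Proof.
elim: N => [|N IH]; first by rewrite big_ord0 minn0.
by rewrite big_ord_recr /= IH; case: (ltnP N lo) => ?; case: (ltnP N hi) => ? /=; lia.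
Qed.

Section Profiles.
Variables (n : nat) (P : nat -> bool).

Lemma profile_empty : (forall j, P j = false) -> nblocks n P = 0 /\ nadjacent n P = 0.
Proof. by move=> P_false; split; apply: big1 => i _; rewrite !P_false. Qed.

Lemma profile_sparse m : #|[set j : 'I_n | P j.+1]| = m -> (forall j, P j -> ~~ P j.+1) ->
  nblocks n P = Posz m /\ nadjacent n P = 0.
Proof.
move=> card_P P_sparse; split; first by rewrite /nblocks -Posz_sum -card_set_sum card_P.
by apply: big1 => i _; case Pi: (P i.+1); rewrite //= (negbTE (P_sparse _ Pi)).
Qed.

Lemma profile_full : (0 < n)%N -> (forall j, (1 <= j <= n)%N -> P j) ->
  nblocks n P = Posz n /\ nadjacent n P = Posz n - 1.
Proof.
move=> n_gt0 P_full; split.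
- rewrite /nblocks (eq_bigr (fun _ => 1)) ?sumr_const ?card_ord -?natz // => i _.
  by rewrite P_full //= ltn_ord.
- rewrite /nadjacent (eq_bigr (fun _ => 1)) ?sumr_const ?card_ord -?natz; first by lia.
  by move=> i _; have := ltn_ord i => lt_i; rewrite !P_full //; lia.
Qed.

Lemma profile_interval m a : (1 <= a)%N -> (a + m <= n.+1)%N -> (0 < m)%N ->
  (forall j, P j = (a <= j < a + m)%N) -> nblocks n P = Posz m /\ nadjacent n P = Posz m - 1.
Proof.
move=> a_gt0 am_le m_gt0 P_int; rewrite /nblocks /nadjacent -!Posz_sum; split.
- rewrite (eq_bigr (fun v : 'I_n => (a.-1 <= v < (a + m).-1)%N : nat)) => [|i _].
    by rewrite count_ord_interval; congr Posz; lia.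
  by rewrite P_int; congr nat_of_bool; lia.
- rewrite (eq_bigr (fun v : 'I_n.-1 => (a.-1 <= v < (a + m).-2)%N : nat)) => [|i _].
    by rewrite count_ord_interval; lia.
  by rewrite !P_int; congr nat_of_bool; lia.
Qed.

End Profiles.

(* Q(n, k) is the case h = 2k - 3. *)
Section Q.
Variables (n m h : nat) (c : config).
Hypotheses (n_eq : n = (2 * m)%N) (m_gt0 : (0 < m)%N) (h_odd : odd h).
Hypothesis c_supp : forall i j, c i j -> (1 <= i <= h.+2)%N /\ (1 <= j <= n)%N.
Hypothesis c_sparse : forall i, (1 <= i <= h)%N ->
  #|[set j : 'I_n | c i j.+1]| = m /\ (forall j, c i j -> ~~ c i j.+1).
Hypothesis c_full : forall j, (1 <= j <= n)%N -> c h.+1 j.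
Hypothesis c_interval : exists a, [/\ (1 <= a)%N, (a + m <= n.+1)%N &
                                     forall j, c h.+2 j = (a <= j < a + m)%N].

Let n_gt0 : (0 < n)%N. Proof. by rewrite n_eq muln_gt0. Qed.

Let c_out i j : (i == 0%N) || (h.+2 < i)%N || (j == 0%N) || (n < j)%N -> c i j = false.
Proof. by case cij: (c i j) => //; have := c_supp cij; lia. Qed.

Let c_slot0 i : c i 0%N = false. Proof. by rewrite c_out ?orbT. Qed.
Let c_slotS i : c i n.+1 = false. Proof. by rewrite c_out // leqnn !orbT. Qed.
Let c_level0 j : c 0%N j = false. Proof. exact: c_out. Qed.
Let c_levelS j : c h.+3 j = false. Proof. by rewrite c_out // leqnn orbT. Qed.

Let profile_level_sparse i : (1 <= i <= h)%N ->
  nblocks n (c i) = Posz m /\ nadjacent n (c i) = 0.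
Proof. by move=> /c_sparse[]; exact: profile_sparse. Qed.

Let profile_level_full : nblocks n (c h.+1) = Posz n /\ nadjacent n (c h.+1) = Posz n - 1.
Proof. exact: profile_full n_gt0 c_full. Qed.

Let profile_level_top : nblocks n (c h.+2) = Posz m /\ nadjacent n (c h.+2) = Posz m - 1.
Proof.
by have [a [a_gt0 am_le top]] := c_interval; exact: profile_interval a_gt0 am_le m_gt0 top.
Qed.

Lemma slice_euler_bottom : slice_euler n h.+2 c 0 = Posz m.
Proof.
rewrite (slice_euler_even c_supp (isT : ~~ odd 0)) sum_slice //.
have [-> ->] := profile_empty n c_level0.
have [-> ->] := @profile_level_sparse 1%N (odd_gt0 h_odd).
by rewrite !c_level0 n_eq slice_empty_sparse.
Qed.

Lemma slice_euler_sparse z :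
  (1 <= z < h)%N -> slice_euler n h.+2 c z = - (2 * Posz m * (Posz m - 1)).
Proof.
move=> z_range.
have [sz wz] : nblocks n (c z) = Posz m /\ nadjacent n (c z) = 0.
  by apply: profile_level_sparse; lia.
have [sz1 wz1] : nblocks n (c z.+1) = Posz m /\ nadjacent n (c z.+1) = 0.
  by apply: profile_level_sparse; lia.
case: (boolP (odd z)) => z_par.
- by rewrite (slice_euler_odd c_supp z_par) sum_slice // sz wz sz1 wz1 n_eq slice_sparse_odd.
- by rewrite (slice_euler_even c_supp z_par) sum_slice // sz wz sz1 wz1 n_eq slice_sparse_even.
Qed.

Lemma slice_euler_below_full : slice_euler n h.+2 c h = - (Posz m - 1).
Proof.
have h_range : (1 <= h <= h)%N by rewrite leqnn odd_gt0.
rewrite (slice_euler_odd c_supp h_odd) sum_slice //.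
have [-> ->] := profile_level_full.
have [-> ->] := profile_level_sparse h_range.
by rewrite !c_full ?leqnn ?n_gt0 // n_eq slice_sparse_full.
Qed.

Lemma slice_euler_full : slice_euler n h.+2 c h.+1 = 0.
Proof.
have full_even : ~~ odd h.+1 by rewrite /= negbK.
rewrite (slice_euler_even c_supp full_even) sum_slice //.
have [-> ->] := profile_level_full.
have [-> ->] := profile_level_top.
by rewrite !c_full ?leqnn ?n_gt0 // n_eq slice_full_interval.
Qed.

Lemma slice_euler_top : slice_euler n h.+2 c h.+2 = 1.
Proof.
have top_odd : odd h.+2 by rewrite /= negbK.
rewrite (slice_euler_odd c_supp top_odd) sum_slice //.
have [-> ->] := profile_empty n c_levelS.
have [-> ->] := profile_level_top.
by rewrite !c_levelS n_eq slice_interval_empty.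
Qed.

Lemma euler_char_Q : euler_char n h.+2 c = 2 - 2 * (Posz h - 1) * Posz m * (Posz m - 1).
Proof.
have [h' h_eq] : exists h', h = h'.+1 by exists h.-1; rewrite prednK ?odd_gt0.
rewrite euler_char_slices h_eq 3!big_ord_recr big_ord_recl /=.
rewrite -h_eq slice_euler_bottom slice_euler_below_full slice_euler_full slice_euler_top.
rewrite (eq_bigr (fun _ => - (2 * Posz m * (Posz m - 1)))); last first.
  by move=> i _; rewrite slice_euler_sparse // /bump; have := ltn_ord i; lia.
rewrite sumr_const card_ord -mulr_natr natz.
have -> : Posz h - 1 = Posz h' by rewrite h_eq -addn1 PoszD addrK.
ring.
Qed.

Lemma genus_Q : genus n h.+2 c = Posz ((h - 1) * m * (m - 1)).
Proof.
rewrite /genus euler_char_Q.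
have -> : Posz h - 1 = Posz (h - 1) by have := odd_gt0 h_odd; lia.
have -> : Posz m - 1 = Posz (m - 1) by lia.
rewrite (_ : 2 - _ = 2 * Posz ((h - 1) * m * (m - 1))) ?mulKz // !PoszM.
ring.
Qed.

End Q.

Theorem mainTheorem4 (n k : nat) (c : config) :
  (2 <= n)%N -> ~~ odd n -> (3 <= k)%N ->
  (* exactly the levels 1..2k-1, slots 1..n *)
  (forall i j, c i j -> (1 <= i <= k.*2 - 1)%N /\ (1 <= j <= n)%N) ->
  (* top level 2k-1: n/2 blocks in consecutive slots a, ..., a + n/2 - 1 *)
  (exists a : nat, [/\ (1 <= a)%N, (a + n./2 <= n.+1)%N &
                       forall j, c (k.*2 - 1)%N j = (a <= j < a + n./2)%N]) ->
  (* level 2k-2 is full *)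
  (forall j, (1 <= j <= n)%N -> c (k.*2 - 2)%N j) ->
  (* levels 1..2k-3: n/2 blocks in pairwise non-adjacent slots *)
  (forall i, (1 <= i <= k.*2 - 3)%N ->
     #|[set j : 'I_n | c i j.+1]| = n./2 /\ (forall j, c i j -> ~~ c i j.+1)) ->
  genus n (k.*2 - 1) c = Posz ((n * (n - 2) * (k - 2)) %/ 2)%N.
Proof.
move=> n_ge2 n_even k_ge3 c_supp c_top c_full c_sparse.
have n_eq : n = (2 * n./2)%N.
  by rewrite -[n in LHS]odd_double_half (negbTE n_even) add0n -mul2n.
have top_eq : (k.*2 - 1 = (k.*2 - 3).+2)%N by lia.
have full_eq : (k.*2 - 2 = (k.*2 - 3).+1)%N by lia.
rewrite top_eq in c_supp c_top *; rewrite full_eq in c_full.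
rewrite (genus_Q n_eq) //; last 2 first.
- by lia.
- by rewrite oddB ?odd_double //; lia.
congr Posz; rewrite [in RHS]n_eq.
have -> : (k.*2 - 3 - 1 = 2 * (k - 2))%N by lia.
have -> : (2 * n./2 - 2 = 2 * (n./2 - 1))%N by lia.
rewrite [X in (X %/ 2)%N](_ : _ * _ = 2 * (2 * (k - 2) * n./2 * (n./2 - 1)))%N ?mulKn //.
ring.
Qed.
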